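(* There is an absolute constant $C$ such that for all integers $b\ge 0$ and $q\ge 1$, with $n=2^b$, there is an arithmetic circuit using at most $C\,q\binom{n}{\downarrow q}$ gates $\oplus$ (and the identity element $0$) that, for every commutative monoid $(S,\oplus,0)$ and every $f:[n]\to S$, computes for every $Y\in\binom{[n]}{q}$ the value $e(Y)=\bigoplus_{x\in[n]\setminus Y} f(x)$.
   Context: $\binom{[n]}{q}$ is the family of $q$-element subsets of $[n]=\{1,\dots,n\}$, and $\binom{n}{\downarrow q}=\sum_{i=0}^{q}\binom{n}{i}$. An arithmetic circuit consists of input gates (one per $x\in[n]$, evaluating to $f(x)$), constant gates evaluating to $0$, and binary $\oplus$-gates, with designated output gates (one per $Y$); gate count refers to the number of $\oplus$-gates. *)

From mathcomp Require Import all_boot.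
Set Implicit Arguments. Unset Strict Implicit. Unset Printing Implicit Defensive.

Definition binom_down (n q : nat) : nat := \sum_(i < q.+1) 'C(n, i).

(* Gates of an arithmetic circuit over inputs indexed by 'I_n.
   Gates are listed in topological order; gate number k is the k-th element. *)
Inductive gate (n : nat) : Type :=
| GInput of 'I_n
| GZero
| GOp of nat & nat.

Definition circuit (n : nat) := seq (gate n).

Definition wf_circuit n (c : circuit n) : Prop :=
  forall k i j, k < size c -> nth (GZero n) c k = GOp n i j -> i < k /\ j < k.

Definition is_op n (g : gate n) : bool := if g is GOp _ _ then true else false.
Definition op_count n (c : circuit n) : nat := count (@is_op n) c.

Section Eval.
Variables (S : Type) (idx : S) (op : Monoid.com_law idx).

Definition eval_gate n (f : 'I_n -> S) (vals : seq S) (g : gate n) : S :=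
  match g with
  | GInput x => f x
  | GZero => idx
  | GOp i j => op (nth idx vals i) (nth idx vals j)
  end.

Definition eval_circuit n (c : circuit n) (f : 'I_n -> S) : seq S :=
  foldl (fun vals g => rcons vals (eval_gate f vals g)) [::] c.

Definition gate_value n (c : circuit n) (f : 'I_n -> S) (k : nat) : S :=
  nth idx (eval_circuit c f) k.
End Eval.

From mathcomp Require Import all_boot zify.
Set Implicit Arguments. Unset Strict Implicit. Unset Printing Implicit Defensive.

(* The complement of a q-set Y = {y_0 < ... < y_(q-1)} of [0, n) is the union
   of its q + 1 gaps [0, y_0), [y_0 + 1, y_1), ..., [y_(q-1) + 1, n).  The
   circuit first computes the sums of enough intervals of [0, n): all of them,
   with O(n^2) gates, when q >= 2 (then n^2 = O(binom(n, <= 2))), and only the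
   prefixes and suffixes, with O(n) gates, when q = 1.  Then each q-set gets a
   chain of q + 1 gates adding its gap sums, which costs (q + 1) 'C(n, q).
   The construction works for every n, not only for powers of two. *)

(* A strictly increasing s = [:: y_0; ...; y_(k-1)]
   of naturals below m cuts [0, m) into the k+1 intervals [lo_t, hi_t) with
   lo_0 = 0, lo_t = y_(t-1) + 1, hi_t = y_t and hi_k = m; the sum of F over
   [0, m) minus s is the sum of the interval sums. *)
Section Gaps.
Variables (S : Type) (idx : S) (op : Monoid.law idx) (F : nat -> S) (m : nat).

Definition seg i j := \big[op/idx]_(i <= x < j) F x.

Definition gap_lo (s : seq nat) t := if t is t'.+1 then (nth 0 s t').+1 else 0.
Definition gap_hi (s : seq nat) t := nth m s t.

Fixpoint gaps_sum (a : nat) (s : seq nat) : S :=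
  if s is y :: s' then op (seg a y) (gaps_sum y.+1 s') else seg a m.

Lemma gaps_sum_complement a s : sorted ltn s -> all (fun x => a <= x < m) s ->
  gaps_sum a s = \big[op/idx]_(a <= x < m | x \notin s) F x.
Proof.
elim: s a => [|y s IH] a /= sorted_s; first by rewrite /seg big_mkcond.
case/andP=> /andP[a_y y_m] s_in.
have y_lt : all (ltn y) s := order_path_min ltn_trans sorted_s.
rewrite (IH _ (path_sorted sorted_s)); last first.
  apply/allP=> x x_s; apply/andP; split; first exact: (allP y_lt).
  by case/andP: (allP s_in x x_s).
rewrite [RHS]big_mkcond (big_cat_nat a_y (ltnW y_m)) /= (big_ltn y_m).
rewrite mem_head Monoid.mul1m /seg; congr (op _ _).
  apply: eq_big_nat => x /andP[_ x_y]; rewrite in_cons negb_or neq_ltn x_y /=.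
  by case: ifP => // /negbFE /(allP y_lt) /=; rewrite ltnNge (ltnW x_y).
rewrite big_mkcond; apply: eq_big_nat => x /andP[y_x _]; rewrite in_cons negb_or.
by rewrite neq_ltn y_x orbT.
Qed.

Lemma gap_lo_le s t : all (fun x => x < m) s -> t <= size s -> gap_lo s t <= m.
Proof. by case: t => //= t s_lt t_s; apply: (allP s_lt); rewrite mem_nth. Qed.

Lemma gap_hi_le s t : all (fun x => x < m) s -> gap_hi s t <= m.
Proof.
move=> s_lt; rewrite /gap_hi; case: (ltnP t (size s)) => [t_s|s_t].
  by apply: ltnW; apply: (allP s_lt); rewrite mem_nth.
by rewrite nth_default.
Qed.

Lemma gaps_sum_drop s t : t < size s ->
  gaps_sum (gap_lo s t) (drop t s) =
  op (seg (gap_lo s t) (gap_hi s t)) (gaps_sum (gap_lo s t.+1) (drop t.+1 s)).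
Proof. by move=> t_s; rewrite (drop_nth 0 t_s) /gap_hi (set_nth_default 0). Qed.

Lemma gaps_sum_last s :
  gaps_sum (gap_lo s (size s)) (drop (size s) s) =
  seg (gap_lo s (size s)) (gap_hi s (size s)).
Proof. by rewrite drop_size /gap_hi nth_default. Qed.

End Gaps.

(* Circuits whose gate k is h k, except that an oplus-gate is replaced by the
   constant 0 unless it reads only earlier gates: they are well formed by
   construction, and a gate that already reads earlier gates is kept. *)
Section Guarded.
Variable n : nat.

Definition refs_below k (g : gate n) : bool :=
  if g is GOp i j then (i < k) && (j < k) else true.

Definition guard k (g : gate n) : gate n := if refs_below k g then g else GZero n.

Definition guarded (h : nat -> gate n) (N : nat) : circuit n :=
  mkseq (fun k => guard k (h k)) N.

Lemma guarded_wf h N : wf_circuit (guarded h N).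
Proof.
move=> k i j; rewrite size_mkseq => k_N; rewrite nth_mkseq // /guard.
by case: ifP => // refs_k Ek; move: refs_k; rewrite Ek => /andP.
Qed.

Variables (S : Type) (idx : S) (op : Monoid.com_law idx) (f : 'I_n -> S).

Definition step vals (g : gate n) := rcons vals (eval_gate op f vals g).

Lemma nth_foldl_step (c : circuit n) vals i :
  i < size vals -> nth idx (foldl step vals c) i = nth idx vals i.
Proof.
elim: c vals => [|g c IH] vals i_vals //=.
by rewrite IH /step ?nth_rcons ?i_vals // size_rcons ltnW.
Qed.

Lemma size_foldl_step (c : circuit n) vals :
  size (foldl step vals c) = size vals + size c.
Proof.
by elim: c vals => [|g c IH] vals /=; rewrite ?addn0 // IH /step size_rcons addSnnS.
Qed.

Lemma gate_value_local (c : circuit n) k :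
  k < size c -> refs_below k (nth (GZero n) c k) ->
  gate_value op c f k = eval_gate op f (eval_circuit op c f) (nth (GZero n) c k).
Proof.
move=> k_c refs_k; rewrite /gate_value /eval_circuit -/step.
set before := foldl step [::] (take k c).
have size_before : size before = k by rewrite size_foldl_step size_take k_c.
have split_c : foldl step [::] c =
    foldl step (step before (nth (GZero n) c k)) (drop k.+1 c).
  by rewrite -{1}(cat_take_drop k c) (drop_nth (GZero n) k_c) foldl_cat.
have value_below i : i < k -> nth idx (foldl step [::] c) i = nth idx before i.
  move=> i_k; rewrite split_c nth_foldl_step /step ?nth_rcons ?size_before ?i_k //.
  by rewrite size_rcons size_before ltnW.
rewrite {1}split_c nth_foldl_step /step ?size_rcons ?size_before //.
rewrite nth_rcons size_before ltnn eqxx.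
case: (nth _ c k) refs_k => [x||i j] //= /andP[i_k j_k].
by rewrite !value_below.
Qed.

Lemma guarded_value (h : nat -> gate n) N k : k < N -> refs_below k (h k) ->
  gate_value op (guarded h N) f k =
  eval_gate op f (eval_circuit op (guarded h N) f) (h k).
Proof.
move=> k_N refs_k; have nth_k : nth (GZero n) (guarded h N) k = h k.
  by rewrite nth_mkseq // /guard refs_k.
by rewrite gate_value_local ?nth_k // size_mkseq.
Qed.

End Guarded.

Lemma block_pos a d u : u < d -> (a * d + u) %/ d = a /\ (a * d + u) %% d = u.
Proof.
move=> u_d; have d_gt0 : 0 < d by apply: leq_ltn_trans u_d.
by rewrite divnMDl // divn_small // addn0 modnMDl modn_small.
Qed.

(* Its gates, in order:
   - the inputs x < n, at position x;
   - the prefix sums [0, j), j <= n, at position pre j;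
   - a table of interval sums: row r holds the sums [n - r, j), each obtained
     from row r - 1 with one gate; when q >= 2 all columns j <= n are present,
     when q <= 1 only the suffix column j = n (this keeps the table linear);
   - for each q-set Y a chain of q + 1 gates adding up the gaps of Y, from
     the last one to the first. *)
Section Construction.
Variables n q : nat.

Definition width := if 1 < q then n.+1 else 1.
Definition column j := if 1 < q then j else 0.
Definition column_of c := if 1 < q then c else n.

Definition pre j := n + j.
Definition table0 := n + n.+1.
Definition cell_at r j := table0 + r * width + column j.
Definition out0 := table0 + n.+1 * width.

Definition interval l h := if l == 0 then pre h else cell_at (n - l) h.

Definition qsets : seq {set 'I_n} := enum [set Y : {set 'I_n} | #|Y| == q].
Definition chain r u := out0 + r * q.+1 + u.
Definition circuit_size := out0 + size qsets * q.+1.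

Definition elems (Y : {set 'I_n}) : seq nat := sort leq [seq val x | x <- enum Y].

Definition prefix_gate j : gate n :=
  if j is j'.+1 then GOp n (pre j') j' else GZero n.

Definition table_gate r c : gate n :=
  let i := n - r in let j := column_of c in
  if i < j then GOp n i (cell_at r.-1 j) else GZero n.

Definition chain_gate r u : gate n :=
  let s := elems (nth set0 qsets r) in let t := q - u in
  GOp n (interval (gap_lo s t) (gap_hi n s t)) (if u is u'.+1 then chain r u' else pre 0).

Definition layout k : gate n :=
  if k < n then (if insub k is Some x then GInput x else GZero n)
  else if k < table0 then prefix_gate (k - n)
  else if k < out0 then table_gate ((k - table0) %/ width) ((k - table0) %% width)
  else chain_gate ((k - out0) %/ q.+1) ((k - out0) %% q.+1).

Definition circ : circuit n := guarded layout circuit_size.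
Definition out (Y : {set 'I_n}) := chain (index Y qsets) q.

Lemma width_gt0 : 0 < width.
Proof. by rewrite /width; case: ifP. Qed.

Lemma column_lt j : j <= n -> column j < width.
Proof. by rewrite /column /width; case: ifP. Qed.

Lemma column_ofK j : (1 < q) || (j == n) -> column_of (column j) = j.
Proof. by rewrite /column_of /column; case: (1 < q) => //= /eqP ->. Qed.

Lemma cell_at_lt r j : r <= n -> j <= n -> cell_at r j < out0.
Proof.
move=> r_n j_n; have := column_lt j_n; rewrite /cell_at /out0.
have : r.+1 * width <= n.+1 * width by rewrite leq_mul2r ltnS r_n orbT.
rewrite mulSn; lia.
Qed.

Lemma interval_lt l h : h <= n -> interval l h < out0.
Proof.
move=> h_n; rewrite /interval; case: eqP => _; last exact: cell_at_lt (leq_subr _ _) h_n.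
by rewrite /pre /out0 /table0; lia.
Qed.

Lemma chain_lt_size r u : r < size qsets -> u <= q -> chain r u < circuit_size.
Proof.
move=> r_qsets u_q; rewrite /chain /circuit_size.
have : r.+1 * q.+1 <= size qsets * q.+1 by rewrite leq_mul2r r_qsets orbT.
rewrite mulSn; lia.
Qed.

Lemma layout_pre j : j <= n -> layout (pre j) = prefix_gate j.
Proof.
move=> j_n; rewrite /layout /pre /table0.
by rewrite ifF ?ifT ?addKn //; lia.
Qed.

Lemma layout_cell r j : r <= n -> j <= n ->
  layout (cell_at r j) = table_gate r (column j).
Proof.
move=> r_n j_n; have column_j := column_lt j_n.
have table0_le : table0 <= cell_at r j by rewrite /cell_at -addnA leq_addr.
have [not_input not_pre] : (cell_at r j < n) = false /\ (cell_at r j < table0) = false.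
  by move: table0_le; rewrite /table0; lia.
rewrite /layout not_input not_pre (cell_at_lt r_n j_n).
by rewrite /cell_at -addnA addKn; case: (block_pos r column_j) => -> ->.
Qed.

Lemma layout_chain r u : u <= q -> layout (chain r u) = chain_gate r u.
Proof.
rewrite -ltnS => u_q; rewrite /layout !ifF; try by rewrite /chain /out0 /table0; lia.
by rewrite /chain -addnA addKn; case: (block_pos r u_q) => -> ->.
Qed.

Lemma out0_le_size : out0 <= circuit_size.
Proof. exact: leq_addr. Qed.

Lemma elems_sorted Y : sorted ltn (elems Y).
Proof.
rewrite ltn_sorted_uniq_leq sort_uniq (map_inj_uniq val_inj) enum_uniq /=.
exact: (sort_sorted leq_total).
Qed.

Lemma elems_lt Y : all (fun x => x < n) (elems Y).
Proof. by apply/allP=> x; rewrite mem_sort => /mapP[y _ ->] /=. Qed.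

Lemma size_elems Y : size (elems Y) = #|Y|.
Proof. by rewrite size_sort size_map cardE. Qed.

Lemma mem_elems Y (x : 'I_n) : (val x \in elems Y) = (x \in Y).
Proof. by rewrite mem_sort (mem_map val_inj) mem_enum. Qed.

Section Semantics.
Variables (S : Type) (idx : S) (op : Monoid.com_law idx) (f : 'I_n -> S).

Definition input (x : nat) : S := if insub x is Some y then f y else idx.

Local Notation value := (gate_value op circ f).
Local Notation seg := (seg op input).

Lemma value_layout k : k < circuit_size -> refs_below k (layout k) ->
  value k = eval_gate op f (eval_circuit op circ f) (layout k).
Proof. exact: guarded_value. Qed.

Lemma value_op k i j : k < circuit_size -> layout k = GOp n i j ->
  i < k -> j < k -> value k = op (value i) (value j).
Proof.
move=> k_size layout_k i_k j_k.
by rewrite value_layout // layout_k //= i_k j_k.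
Qed.

Lemma value_zero k : k < circuit_size -> layout k = GZero n -> value k = idx.
Proof. by move=> k_size layout_k; rewrite value_layout // layout_k. Qed.

Lemma value_input x : x < n -> value x = input x.
Proof.
move=> x_n; have x_size : x < circuit_size.
  by apply: leq_trans out0_le_size; rewrite /out0 /table0; lia.
rewrite value_layout //; last by rewrite /layout x_n; case: insub.
by rewrite /layout x_n /input; case: insub.
Qed.

Lemma value_pre j : j <= n -> value (pre j) = seg 0 j.
Proof.
have pre_size i : i <= n -> pre i < circuit_size.
  by move=> i_n; apply: leq_trans out0_le_size; rewrite /pre /out0 /table0; lia.
elim: j => [|j IH] j_n.
  by rewrite value_zero ?layout_pre ?pre_size // /seg big_geq.
rewrite (value_op (i := pre j) (j := j)) ?layout_pre ?pre_size //; try by rewrite /pre; lia.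
by rewrite IH ?value_input ?(ltnW j_n) // /seg big_nat_recr.
Qed.

Lemma value_cell r j : r <= n -> j <= n -> (1 < q) || (j == n) ->
  value (cell_at r j) = seg (n - r) j.
Proof.
move=> + j_n present_j.
have cell_size r' : r' <= n -> cell_at r' j < circuit_size.
  by move=> r'_n; exact: leq_trans (cell_at_lt r'_n j_n) out0_le_size.
have layout_r r' : r' <= n -> layout (cell_at r' j) =
    if n - r' < j then GOp n (n - r') (cell_at r'.-1 j) else GZero n.
  by move=> r'_n; rewrite layout_cell // /table_gate column_ofK.
elim: r => [|r IH] r_n.
  have layout_0 : layout (cell_at 0 j) = GZero n by rewrite layout_r // subn0 ltnNge j_n.
  by rewrite value_zero ?cell_size // subn0 /seg big_geq.
have [lt_j|ge_j] := ltnP (n - r.+1) j; last first.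
  have layout_0 : layout (cell_at r.+1 j) = GZero n by rewrite layout_r // ltnNge ge_j.
  by rewrite value_zero ?cell_size // /seg big_geq.
have input_below : n - r.+1 < cell_at r.+1 j by rewrite /cell_at /table0; lia.
have row_below : cell_at r j < cell_at r.+1 j.
  by rewrite ltn_add2r ltn_add2l ltn_mul2r width_gt0 ltnSn.
rewrite (value_op (i := n - r.+1) (j := cell_at r j)) ?cell_size ?layout_r ?lt_j //.
rewrite value_input ?IH ?(ltnW r_n); try lia.
by rewrite /seg (big_ltn lt_j); congr (op _ (\big[op/idx]_(_ <= _ < j) _)); lia.
Qed.

Lemma value_interval l h : l <= n -> h <= n -> [|| l == 0, 1 < q | h == n] ->
  value (interval l h) = seg l h.
Proof.
rewrite /interval => l_n h_n; case: eqP => [-> _|_ present]; first exact: value_pre.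
by rewrite value_cell ?leq_subr ?subKn.
Qed.

Lemma value_chain Y u : Y \in qsets -> u <= q ->
  value (chain (index Y qsets) u) =
  gaps_sum op input n (gap_lo (elems Y) (q - u)) (drop (q - u) (elems Y)).
Proof.
set r := index Y qsets; set s := elems Y => Y_qsets.
have r_qsets : r < size qsets by rewrite index_mem.
have size_s : size s = q.
  by move: Y_qsets; rewrite mem_enum inE size_elems => /eqP.
have s_lt := elems_lt Y.
have layout_u u' : u' <= q -> layout (chain r u') = GOp n
    (interval (gap_lo s (q - u')) (gap_hi n s (q - u')))
    (if u' is u''.+1 then chain r u'' else pre 0).
  by move=> u'_q; rewrite layout_chain // /chain_gate nth_index.
have value_gap t : t <= q -> value (interval (gap_lo s t) (gap_hi n s t)) =
    seg (gap_lo s t) (gap_hi n s t).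
  move=> t_q; rewrite value_interval ?gap_lo_le ?gap_hi_le ?size_s //.
  case: t t_q => [//|t] t_q; case: (ltnP 1 q) => [//|q_le1].
  by rewrite /gap_hi nth_default ?eqxx ?orbT // size_s; lia.
have interval_below t u' : interval (gap_lo s t) (gap_hi n s t) < chain r u'.
  by apply: leq_trans (interval_lt _ (gap_hi_le _ s_lt)) _; rewrite /chain -addnA leq_addr.
elim: u => [|u IH] u_q.
  rewrite (value_op (chain_lt_size r_qsets u_q) (layout_u _ u_q) (interval_below _ _)); last first.
    by rewrite /chain /pre /out0 /table0; lia.
  rewrite value_pre // /seg big_geq // Monoid.mulm1 subn0 value_gap //.
  by rewrite -size_s gaps_sum_last.
rewrite (value_op (chain_lt_size r_qsets u_q) (layout_u _ u_q) (interval_below _ _)); last first.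
  by rewrite /chain; lia.
rewrite IH ?(ltnW u_q) // value_gap ?leq_subr //.
have -> : q - u = (q - u.+1).+1 by lia.
have t_s : q - u.+1 < size s by rewrite size_s; lia.
by rewrite (gaps_sum_drop _ _ _ t_s).
Qed.

Lemma value_out Y : Y \in qsets -> value (out Y) = \big[op/idx]_(x in ~: Y) f x.
Proof.
move=> Y_qsets; rewrite value_chain // subnn drop0.
rewrite gaps_sum_complement ?elems_sorted ?elems_lt // big_mkord.
apply: eq_big => [x|x _]; first by rewrite mem_elems inE.
by rewrite /input valK.
Qed.

End Semantics.

End Construction.

Lemma size_qsets n q : size (qsets n q) = 'C(n, q).
Proof. by rewrite /qsets -cardE card_draws card_ord. Qed.

Lemma binom_down_mono n k q : k <= q -> binom_down n k <= binom_down n q.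
Proof.
elim: q => [|q IH]; first by rewrite leqn0 => /eqP ->.
rewrite leq_eqVlt => /predU1P[-> //|k_q].
apply: leq_trans (IH k_q) _.
by rewrite [X in _ <= X]/binom_down big_ord_recr leq_addr.
Qed.

Lemma bin_le_binom_down n q : 'C(n, q) <= binom_down n q.
Proof. by rewrite /binom_down big_ord_recr /= leq_addl. Qed.

Lemma succ_le_binom_down n q : 0 < q -> n.+1 <= binom_down n q.
Proof.
move=> q_gt0; apply: leq_trans (binom_down_mono n q_gt0).
by rewrite /binom_down !big_ord_recr big_ord0 /= bin0 bin1.
Qed.

(* for q >= 2 the binomial 'C(n, 2) pays for the quadratic table *)
Lemma square_le_binom_down n q : 1 < q -> n.+1 * n.+1 <= 3 * binom_down n q.
Proof.
move=> q_gt1; apply: leq_trans (_ : 3 * binom_down n 2 <= _); last first.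
  by rewrite leq_mul2l binom_down_mono.
have bin2_double : 'C(n, 2) * 2 = n * n.-1 by rewrite bin_ffact !ffactnS ffactn0 muln1.
rewrite /binom_down !big_ord_recr big_ord0 /= bin0 bin1.
case: n bin2_double => [|n] //=; nia.
Qed.

Lemma circuit_size_bound n q : 0 < q -> circuit_size n q <= 5 * q * binom_down n q.
Proof.
move=> q_gt0; rewrite /circuit_size /out0 /table0 size_qsets /width.
set B := binom_down n q.
have n_B := succ_le_binom_down n q_gt0.
have C_B : 'C(n, q) * q.+1 <= B * q.+1 by rewrite leq_mul2r bin_le_binom_down orbT.
case: ltnP => [q_gt1|q_le1].
- have sq_B := square_le_binom_down n q_gt1.
  have qB : 2 * B <= q * B by rewrite leq_mul2r q_gt1 orbT.
  move: C_B; rewrite !mulnS -mulnA; lia.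
- have -> : q = 1 by lia.
  move: C_B; rewrite bin1; lia.
Qed.

Theorem mainTheorem7 :
  exists C : nat,
    forall b q : nat, 1 <= q ->
      let n := 2 ^ b in
      exists (c : circuit n) (out : {set 'I_n} -> nat),
        [/\ wf_circuit c,
            op_count c <= C * q * binom_down n q,
            (forall Y : {set 'I_n}, #|Y| = q -> out Y < size c) &
            (forall (S : Type) (idx : S) (op : Monoid.com_law idx)
                    (f : 'I_n -> S) (Y : {set 'I_n}),
                #|Y| = q ->
                gate_value op c f (out Y) = \big[op/idx]_(x in ~: Y) f x)].
Proof.
exists 5 => b q q_gt0 n.
have qsets_Y (Y : {set 'I_n}) : #|Y| = q -> Y \in qsets n q.
  by move=> card_Y; rewrite mem_enum inE card_Y.
exists (circ n q), (@out n q); split.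
- exact: guarded_wf.
- apply: leq_trans (count_size _ _) _.
  by rewrite size_mkseq circuit_size_bound.
- move=> Y /qsets_Y Y_qsets; rewrite size_mkseq.
  by apply: chain_lt_size; rewrite // index_mem.
- by move=> S idx op f Y /qsets_Y; apply: value_out.
Qed.
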